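(* Let $b\ge1$ and let $G$ be an extended gadget of type II with vertices $p,q,r$ and directed paths $P_1,P_2$ as in its definition. Then: (1) for every $x\in V(G)\setminus\{p,q\}$ there exist $a\in\{1,2\}$ and an $(a,b)$-alternating-path $R$ contained in $G$ with $t_a(R)=x$, $s_1(R)\in\{p,q\}$ and $|V(R)\cap\{p,q\}|=1$; (2) for every non-empty set $X\subseteq V(P_1)\setminus\{p,r\}$ there exist $a\in\{1,2\}$ and an $(a,b)$-alternating-path $R$ contained in $G$ with $t_a(R)\in X$, $s_1(R)\in\{p,q\}$ and $|V(R)\cap\{p,q\}|=|V(R)\cap X|=1$.
   Context: Fix an integer $b\ge1$. A basic gadget of type II is a digraph consisting of vertices $p,q,r$ and a directed path $P_1$ from $r$ to $p$ of length at least $2b^2+b-2$ with $q\notin V(P_1)$, such that every vertex of $P_1$ has an arc to $q$. An extended gadget of type II consists of such a basic gadget together with a directed path $P_2$ of length at least $b$ whose last vertex is $r$, with $V(P_1)\cap V(P_2)=\{r\}$, $q\notin V(P_2)$, and such that either there is an arc from the first vertex of $P_2$ to the second vertex of $P_1$, or there is an arc from some vertex of $V(P_1)\setminus\{r\}$ to the first vertex of $P_2$. For integers $a,b\ge1$, an $(a,b)$-alternating-path is an oriented path $R$ consisting of vertices $s_1,\dots,s_a,t_1,\dots,t_a$ and pairwise internally vertex-disjoint directed paths $Q_1,\dots,Q_a,Q'_1,\dots,Q'_{a-1}$, where $Q_i$ goes from $s_i$ to $t_i$, $Q'_i$ goes from $s_{i+1}$ to $t_i$, and $Q_2,\dots,Q_{a-1},Q'_1,\dots,Q'_{a-1}$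 each have length at least $b$ ($Q_1$, $Q_a$ may have length zero). We write $s_i(R),t_i(R)$ for its vertices. *)

From mathcomp Require Import all_boot.
Set Implicit Arguments. Unset Strict Implicit. Unset Printing Implicit Defensive.

Section Digraphs.
Variable V : finType.

Definition seq_arcs (s : seq V) : rel V :=
  fun x y => (x, y) \in zip s (behead s).

Definition dpath_in (A : rel V) (u v : V) (s : seq V) : bool :=
  match s with
  | [::] => false
  | x :: s' => [&& x == u, path A x s', last x s' == v & uniq s]
  end.

Definition dlength (s : seq V) : nat := (size s).-1.

Definition dpath_ft (u v : V) (s : seq V) : bool := dpath_in (seq_arcs s) u v s.

(* The gadget G is determined by p q r P1 P2 and the set [ex] of "extra"
   arcs (nonempty, each of one of the two allowed kinds).                      *)
Definition gadgetV (q : V) (P1 P2 : seq V) : pred V :=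
  fun v => [|| v \in P1, v \in P2 | v == q].

Definition gadgetA (q : V) (P1 P2 : seq V) (ex : rel V) : rel V :=
  fun x y => [|| seq_arcs P1 x y, seq_arcs P2 x y, (x \in P1) && (y == q)
              | ex x y].

Definition basic_gadget_II (b : nat) (p q r : V) (P1 : seq V) : Prop :=
  [/\ dpath_ft r p P1, 2 * b ^ 2 + b - 2 <= dlength P1 & q \notin P1].

Definition ext_gadget_II (b : nat) (p q r : V) (P1 P2 : seq V) (ex : rel V)
  : Prop :=
  [/\ basic_gadget_II b p q r P1,
      (exists2 f, dpath_ft f r P2 & b <= dlength P2),
      [predI P1 & P2] =i pred1 r,
      q \notin P2 &
      ((exists x y, ex x y) /\
       (forall x y, ex x y ->
        (x = head r P2 /\ y = nth r P1 1) \/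
        ((x \in P1) /\ x <> r /\ y = head r P2)))].

(* R is given by its vertices s_i, t_i and paths Q_i (from s_i to t_i) and
   Q'_i (from s_(i+1) to t_i).  Its vertex sequence, traversed as an
   oriented path s_1 Q_1 t_1 Q'_1^- s_2 Q_2 t_2 ... t_a, is alt_walk. *)
Definition alt_walk (a : nat) (Q Q' : nat -> seq V) : seq V :=
  Q 1 ++ flatten [seq behead (rev (Q' i)) ++ behead (Q i.+1) | i <- iota 1 a.-1].

Definition alt_path_in (VG : pred V) (A : rel V) (a b : nat)
  (s t : nat -> V) (Q Q' : nat -> seq V) : Prop :=
  [/\ 1 <= a,
      (forall i, 1 <= i <= a -> dpath_in A (s i) (t i) (Q i)),
      (forall i, 1 <= i < a -> dpath_in A (s i.+1) (t i) (Q' i)),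
      (forall i, 2 <= i < a -> b <= dlength (Q i)) /\
      (forall i, 1 <= i < a -> b <= dlength (Q' i)) &
      (* R is an oriented path: all its vertices are distinct
         (this gives pairwise internal vertex-disjointness) *)
      uniq (alt_walk a Q Q') &&
      all VG (alt_walk a Q Q')].

End Digraphs.

(* Write P1 = r M p and P2 = f ... r.  All the alternating paths used start at
   q (one of them at p) and otherwise only use vertices of P2 and M, so they
   meet {p, q} exactly once.  For x on P2, take Q'_1 from x along P2 and M and then
   to q (M has at least b - 1 vertices), with Q_2 = [x].  For a set X inside M,
   use an extra arc.  If it is f -> (second vertex of P1), then Q'_1 is P2
   followed by r -> q and Q_2 runs from f through the extra arc along P1 up to
   the first vertex of X; if it leaves p, the single path p f ... r ... up to
   the first vertex of X works.  If it leaves x0 in M, then Q'_1 follows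
   x0 -> f, P2 and r -> q, and Q_2 runs along P1 from x0 to the first vertex of
   X after x0; when there is none, Q'_1 instead starts at the last vertex of X
   before x0 and reaches x0 along P1.  Part (1) for x in M is part (2) for
   X = {x}. *)

From mathcomp Require Import all_boot zify.
Set Implicit Arguments. Unset Strict Implicit. Unset Printing Implicit Defensive.

Lemma split_first_cons (T : eqType) (P : pred T) x s : has P (x :: s) ->
  exists K N, [/\ s = K ++ N, P (last x K) & count P (x :: K) = 1].
Proof.
elim: s x => [|y s IH] x /=; first by rewrite orbF => Px; exists [::], [::]; rewrite /= Px.
have [Px _ | Px /IH[K [N [-> PK cK]]]] := boolP (P x).
  by exists [::], (y :: s); rewrite /= Px.
by exists (y :: K), N; split=> //=; rewrite (negbTE Px).
Qed.

Lemma split_last (T : eqType) (P : pred T) s : has P s ->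
  exists L x K, [/\ s = L ++ x :: K, P x & ~~ has P K].
Proof.
elim: s => [|y s IH] //=; have [/IH[L [x [K [-> Px PK]]]] _ | Ps] := boolP (has P s).
  by exists (y :: L), x, K.
by rewrite orbF => Py; exists [::], y, s.
Qed.

Lemma mem_split (T : eqType) (x : T) s : x \in s -> exists L N, s = L ++ x :: N.
Proof. by case/splitPr=> L N; exists L, N. Qed.

Lemma uniq_cat_meet (T : eqType) (x : T) (s t : seq T) :
  uniq s -> uniq (x :: t) -> {in s, forall v, v \in x :: t -> v = x} -> uniq (s ++ t).
Proof.
move=> us; rewrite cons_uniq => /andP[xt ut] meet; rewrite cat_uniq us ut andbT.
apply/hasPn=> v vt; apply/negP=> vs.
by move: xt; rewrite -(meet v vs) ?vt // in_cons vt orbT.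
Qed.

Lemma card_set_uniq (T : finType) (P : pred T) (w : seq T) :
  uniq w -> #|[set v in w | P v]| = count P w.
Proof.
move=> uw; have -> : [set v in w | P v] = [set v in filter P w].
  by apply/setP=> v; rewrite !inE mem_filter andbC.
by rewrite cardsE (card_uniqP _) ?filter_uniq // size_filter.
Qed.

Lemma seq_arcs_path (V : finType) (x : V) s : path (seq_arcs (x :: s)) x s.
Proof.
elim: s x => //= y s IH x; rewrite /seq_arcs /= mem_head /=.
by apply: sub_path (IH y) => u v; rewrite /seq_arcs /= in_cons orbC => ->.
Qed.

Lemma dpath_ft_cons (V : finType) (u v : V) s :
  dpath_ft u v s -> exists2 t, s = u :: t & last u t = v /\ uniq (u :: t).
Proof. by case: s => // x t /and4P[/eqP-> _ /eqP lt ut]; exists t. Qed.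

Section AlternatingPaths.
Variables (V : finType) (VG : pred V) (A : rel V) (b : nat).

Definition alt_path_walk (a : nat) (u x : V) (W : seq V) : Prop :=
  exists (s t : nat -> V) (Q Q' : nat -> seq V),
    [/\ alt_path_in VG A a b s t Q Q', s 1 = u, t a = x & perm_eq (alt_walk a Q Q') W].

Lemma alt_path_walk_perm a u x W W' :
  perm_eq W W' -> alt_path_walk a u x W -> alt_path_walk a u x W'.
Proof.
move=> WW' [s [t [Q [Q' [R su tx QW]]]]].
by exists s, t, Q, Q'; split=> //; apply: perm_trans QW WW'.
Qed.

Lemma alt_path_walk_card a u x W : alt_path_walk a u x W ->
  exists (s t : nat -> V) (Q Q' : nat -> seq V),
    [/\ alt_path_in VG A a b s t Q Q', s 1 = u, t a = x &
        forall P : pred V, #|[set v in alt_walk a Q Q' | P v]| = count P W].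
Proof.
case=> s [t [Q [Q' [R su tx /permP QW]]]]; exists s, t, Q, Q'; split=> // P.
by case: R => _ _ _ _ /andP[uW _]; rewrite card_set_uniq.
Qed.

Lemma alt_path_walk1 u x Qt : path A u Qt -> last u Qt = x ->
  uniq (u :: Qt) -> all VG (u :: Qt) -> alt_path_walk 1 u x (u :: Qt).
Proof.
move=> pQ lQ uQ aQ.
exists (fun=> u), (fun=> x), (fun=> u :: Qt), (fun=> [::]).
have walkE : alt_walk 1 (fun=> u :: Qt) (fun=> [::]) = u :: Qt by rewrite /alt_walk cats0.
split=> //; last by rewrite walkE.
split=> //; last by rewrite walkE uQ.
- by move=> i _; rewrite /= eqxx pQ lQ eqxx.
- by move=> i; lia.
- by split=> i; lia.
Qed.

(* s_1 = t_1 = v with Q_1 = [:: v], Q'_1 = u :: rcons R v and Q_2 = u :: Qt. *)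
Lemma alt_path_walk2 u v x R Qt : path A u (rcons R v) -> path A u Qt -> last u Qt = x ->
  b <= (size R).+1 -> uniq (v :: u :: R ++ Qt) -> all VG (v :: u :: R ++ Qt) ->
  alt_path_walk 2 v x (v :: u :: R ++ Qt).
Proof.
move=> pR pQ lQ bR uW aW.
pose Q i := if i == 1 then [:: v] else u :: Qt.
exists (fun i => if i == 1 then v else u), (fun i => if i == 1 then v else x), Q,
  (fun=> u :: rcons R v).
have walkE : alt_walk 2 Q (fun=> u :: rcons R v) = v :: rev (u :: R) ++ Qt.
  by rewrite /alt_walk /= cats0 !rev_cons rev_rcons.
have walkP : perm_eq (v :: rev (u :: R) ++ Qt) (v :: u :: R ++ Qt).
  by rewrite perm_cons -cat_cons perm_cat2r perm_rev.
split=> //; last by rewrite walkE.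
split=> //; last by rewrite walkE (perm_uniq walkP) (perm_all _ walkP) uW.
- case=> [|[|[|i]]] // _; first by rewrite /= eqxx.
  rewrite /= eqxx pQ lQ eqxx -cons_uniq.
  apply: subseq_uniq uW; apply: subseq_trans (subseq_cons _ v).
  by rewrite /= eqxx suffix_subseq.
- case=> [|[|i]] //= _; rewrite eqxx pR last_rcons eqxx /=.
  rewrite -cons_uniq -rcons_cons rcons_uniq -cons_uniq.
  exact: subseq_uniq (prefix_subseq [:: v, u & R] Qt) uW.
- by split=> [i|i _]; [lia | rewrite /dlength /= size_rcons].
Qed.
End AlternatingPaths.

Section ExtendedGadget.
Variables (V : finType) (b : nat) (p q r f : V) (P2' M : seq V) (ex : rel V).

Local Notation P1 := (r :: rcons M p).
Local Notation P2 := (f :: P2').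
Local Notation VG := (gadgetV q P1 P2).
Local Notation A := (gadgetA q P1 P2 ex).

Hypothesis P2_last : last f P2' = r.
(* The spine P2 ++ M lists the vertices other than p and q; r is the last
   vertex of P2. *)
Hypothesis spine_uniq : uniq [:: q, p & P2 ++ M].
Hypothesis P1_long : b <= (size M).+1.
Hypothesis P2_long : b <= size P2'.
Hypothesis ex_nonempty : exists x y, ex x y.
Hypothesis ex_arcs : forall x y, ex x y ->
  (x = f /\ y = nth r P1 1) \/ (x \in P1 /\ x <> r /\ y = f).

Lemma ex_arc u v : ex u v -> A u v.
Proof. by rewrite /gadgetA => ->; rewrite !orbT. Qed.

Lemma arc_to_q v : v \in r :: M -> A v q.
Proof.
by rewrite /gadgetA !inE mem_rcons !inE eqxx andbT => /orP[]->; rewrite ?orbT.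
Qed.

Lemma P1_infix_path u t : infix (u :: t) (r :: M) -> path A u t.
Proof.
move/infix_sorted; apply; apply: (@prefix_path _ _ _ _ (rcons M p)).
  by rewrite -cats1 prefix_prefix.
by apply: sub_path (seq_arcs_path r (rcons M p)) => x y xy; rewrite /gadgetA xy.
Qed.

Lemma M_infix_path u t : infix (u :: t) M -> path A u t.
Proof. by move=> uM; apply/P1_infix_path/(infix_trans uM)/suffixW/suffix_cons. Qed.

Lemma P2_infix_path u t : infix (u :: t) P2 -> path A u t.
Proof.
move/infix_sorted; apply.
by apply: sub_path (seq_arcs_path f P2') => x y xy; rewrite /gadgetA xy orbT.
Qed.

Lemma P2_to_q : path A f (rcons P2' q).
Proof.
by rewrite rcons_path P2_last arc_to_q ?mem_head // (P2_infix_path (infix_refl _)).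
Qed.

Lemma arc_P2_to_q u : ex u f -> path A u (rcons P2 q).
Proof. by move=> uf; rewrite /= ex_arc // P2_to_q. Qed.

Lemma spine_in_gadget : {subset [:: q, p & P2 ++ M] <= VG}.
Proof.
move=> v; rewrite [v \in VG]inE !(mem_cat, in_cons, mem_rcons).
by case/or4P=> ->; rewrite ?orbT.
Qed.

Lemma pq_walk_in_gadget u Z : (u == p) || (u == q) -> subseq Z (P2 ++ M) ->
  uniq (u :: Z) && all VG (u :: Z).
Proof.
move=> u_pq subZ; have sub : subseq (u :: Z) [:: q, p & P2 ++ M].
  case/orP: u_pq => /eqP->; last by rewrite /= eqxx; apply: subseq_trans subZ (subseq_cons _ p).
  by apply: subseq_trans (subseq_cons _ q); rewrite /= eqxx.
rewrite (subseq_uniq sub spine_uniq); apply/allP=> v /(mem_subseq sub).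
exact: spine_in_gadget.
Qed.

Lemma spine_neq_pq v : v \in P2 ++ M -> (v == p) || (v == q) = false.
Proof.
move: spine_uniq; rewrite cons_uniq in_cons negb_or cons_uniq => /and3P[/andP[_ qS] pS _] vS.
by apply/norP; split; apply/eqP=> vpq; [move: pS | move: qS]; rewrite -vpq vS.
Qed.

Lemma P2_notin_M v : v \in P2 -> v \notin M.
Proof.
move: spine_uniq; rewrite cons_uniq cons_uniq cat_uniq => /and3P[_ _ /and3P[_ /hasPn PM _]].
by move=> vP2; apply/negP=> /PM; rewrite vP2.
Qed.

Definition gadget_path (x : V) (Z : seq V) : Prop :=
  subseq Z (P2 ++ M) /\
  (alt_path_walk VG A b 1 p x (p :: Z) \/ alt_path_walk VG A b 2 q x (q :: Z)).

Lemma gadget_path_from_p Qt x : path A p Qt -> last p Qt = x -> subseq Qt (P2 ++ M) ->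
  gadget_path x Qt.
Proof.
move=> pQ lQ subQ; split=> //; left.
have /andP[uQ aQ] : uniq (p :: Qt) && all VG (p :: Qt).
  by apply: pq_walk_in_gadget; rewrite // eqxx.
exact: alt_path_walk1.
Qed.

Lemma gadget_path_from_q u R Qt x Z : path A u (rcons R q) -> path A u Qt -> last u Qt = x ->
  b <= (size R).+1 -> perm_eq (u :: R ++ Qt) Z -> subseq Z (P2 ++ M) ->
  gadget_path x Z.
Proof.
move=> pR pQ lQ bR RQZ subZ; split=> //; right.
have WZ : perm_eq [:: q, u & R ++ Qt] (q :: Z) by rewrite perm_cons.
have /andP[uZ aZ] : uniq (q :: Z) && all VG (q :: Z).
  by apply: pq_walk_in_gadget; rewrite // eqxx orbT.
apply: (alt_path_walk_perm WZ); apply: alt_path_walk2 => //.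
  by rewrite (perm_uniq WZ).
by rewrite (perm_all _ WZ).
Qed.

Lemma gadget_path_to_P2 x : x \in P2 -> exists Z, gadget_path x Z.
Proof.
case/mem_split=> L [N EP2]; exists (x :: N ++ M).
have lastN : last x N = r.
  by rewrite -P2_last -[last f P2']/(last x P2) EP2 last_cat.
apply: (@gadget_path_from_q x (N ++ M) [::]) => //.
- have pN : path A x N by apply: P2_infix_path; rewrite EP2 suffix_infix.
  have pM : path A r M by apply: P1_infix_path; exact: infix_refl.
  by rewrite rcons_path cat_path lastN pN pM last_cat lastN arc_to_q ?mem_last.
- by rewrite size_cat; lia.
- by rewrite cats0.
- by rewrite EP2 -catA suffix_subseq.
Qed.

Lemma gadget_path_along_P1 y K N : M = y :: K ++ N -> ex f y \/ ex p f ->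
  gadget_path (last y K) (P2 ++ y :: K).
Proof.
move=> EM arc.
have pK : path A r (y :: K) by rewrite P1_infix_path // EM prefix_infix.
have subK : subseq (P2 ++ y :: K) (P2 ++ M).
  by rewrite EM cat_subseq ?prefix_subseq.
case: arc => [fy | pf].
  apply: (@gadget_path_from_q f P2' (y :: K)) => //; first exact: P2_to_q.
  - by case/andP: pK; rewrite /= (ex_arc fy).
  - exact: leqW.
apply: gadget_path_from_p => //; last by rewrite /= last_cat P2_last.
by rewrite /= ex_arc // cat_path P2_last pK P2_infix_path ?infix_refl.
Qed.

Lemma gadget_path_after_arc L u K N : M = L ++ u :: K ++ N -> ex u f ->
  gadget_path (last u K) (P2 ++ u :: K).
Proof.
move=> EM uf; have uKM : infix (u :: K) M by rewrite EM infix_infix.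
apply: (@gadget_path_from_q u P2 K) => //.
- exact: arc_P2_to_q.
- exact: M_infix_path.
- exact: leqW (leqW P2_long).
- by rewrite (perm_catCA [:: u] P2 K).
- exact: cat_subseq (subseq_refl _) (infixW uKM).
Qed.

Lemma gadget_path_before_arc L x K u B : M = L ++ x :: K ++ u :: B -> ex u f ->
  gadget_path x (P2 ++ x :: rcons K u).
Proof.
move=> EM uf; have xKM : infix (x :: rcons K u) M.
  by rewrite EM -(cat_rcons u K B) (infix_infix L (x :: rcons K u)).
apply: (@gadget_path_from_q x (rcons K u ++ P2) [::]) => //.
- by rewrite rcons_cat cat_path last_rcons M_infix_path // arc_P2_to_q.
- by rewrite size_cat size_rcons /=; lia.
- by rewrite cats0 -cat_cons perm_catC.
- exact: cat_subseq (subseq_refl _) (infixW xKM).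
Qed.

Definition gadget_path_into (X : pred V) : Prop :=
  exists2 x, X x & exists2 S, count X S = 1 & gadget_path x (P2 ++ S).

Lemma gadget_path_into_exists X : has X M -> gadget_path_into X.
Proof.
move=> XM; have [x0 [y0 e0]] := ex_nonempty.
have along_P1 : ex f (nth r P1 1) \/ ex p f -> gadget_path_into X.
  case EM: M XM => [|y M'] // /split_first_cons[K [N [EM' XK cK]]] arc.
  exists (last y K) => //; exists (y :: K) => //.
  by apply: (@gadget_path_along_P1 _ _ N); rewrite ?EM ?EM'.
case: (ex_arcs e0) => [[ex0 ey0] | [x0P1 [x0r ey0]]]; rewrite {}ey0 in e0.
  by apply: along_P1; left; rewrite -ex0.
have [x0p | x0M] : x0 = p \/ x0 \in M.
  move: x0P1; rewrite in_cons mem_rcons in_cons => /or3P[/eqP//|/eqP|]; auto.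
  by apply: along_P1; right; rewrite -x0p.
have [L [B EM]] := mem_split x0M.
have [XB | XB] := boolP (has X (x0 :: B)).
  have [K [N [EB XK cK]]] := split_first_cons XB.
  exists (last x0 K) => //; exists (x0 :: K) => //.
  by apply: (@gadget_path_after_arc L _ _ N); rewrite // EM EB.
have : has X L by move: XM; rewrite EM has_cat (negbTE XB) orbF.
case/split_last=> L' [x [K [EL Xx XK]]]; exists x => //.
exists (x :: rcons K x0).
  have cK : count X K = 0 by apply/eqP; rewrite -leqn0 leqNgt -has_count.
  by case/norP: XB => /negbTE X0 _; rewrite /= Xx -cats1 count_cat cK /= X0.
by apply: (@gadget_path_before_arc L' _ _ _ B); rewrite // EM EL -catA.
Qed.

Lemma alt_path_of_gadget_path x Z : gadget_path x Z ->
  exists a, (a = 1 \/ a = 2) /\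
  exists (s t : nat -> V) (Q Q' : nat -> seq V),
    [/\ alt_path_in VG A a b s t Q Q', t a = x, (s 1 == p) || (s 1 == q),
        #|[set v in alt_walk a Q Q' | (v == p) || (v == q)]| = 1 &
        forall P : pred V, ~~ P p -> ~~ P q ->
          #|[set v in alt_walk a Q Q' | P v]| = count P Z].
Proof.
case=> subZ walkZ.
have [a [u [a12 u_pq /alt_path_walk_card[s [t [Q [Q' [R su tx cardW]]]]]]]] :
    exists a u, [/\ a = 1 \/ a = 2, (u == p) || (u == q) &
                    alt_path_walk VG A b a u x (u :: Z)].
  by case: walkZ => ?; [exists 1, p | exists 2, q]; rewrite eqxx ?orbT; split; auto.
have Z_pq : count (fun v => (v == p) || (v == q)) Z = 0.
  rewrite (eq_in_count (a2 := pred0)) ?count_pred0 // => v /(mem_subseq subZ).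
  exact: spine_neq_pq.
exists a; split=> //; exists s, t, Q, Q'; split=> //; first by rewrite su.
  by rewrite cardW /= Z_pq u_pq.
move=> P Pp Pq; rewrite cardW /=.
by case/orP: u_pq => /eqP->; rewrite ?(negbTE Pp) ?(negbTE Pq).
Qed.

Lemma gadget_alt_path_to x : VG x -> x != p -> x != q ->
  exists a, (a = 1 \/ a = 2) /\
  exists (s t : nat -> V) (Q Q' : nat -> seq V),
    [/\ alt_path_in VG A a b s t Q Q', t a = x, (s 1 == p) || (s 1 == q) &
        #|[set v in alt_walk a Q Q' | (v == p) || (v == q)]| = 1].
Proof.
move=> Vx xp xq; suff [Z /alt_path_of_gadget_path[a [a12 [s [t [Q [Q' [R tx s1 pq _]]]]]]]] :
    exists Z, gadget_path x Z by exists a; split=> //; exists s, t, Q, Q'.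
have [xP2 | xM] : x \in P2 \/ x \in M.
  have rP2 : r \in P2 by rewrite -P2_last mem_last.
  move: Vx; rewrite /gadgetV in_cons mem_rcons in_cons (negbTE xp) (negbTE xq) orbF.
  by case/orP=> [/or3P[/eqP->||]|]; auto.
  exact: gadget_path_to_P2.
have [y /eqP-> [S _ gS]] : gadget_path_into (pred1 x).
  by apply: gadget_path_into_exists; rewrite has_pred1.
by exists (P2 ++ S).
Qed.

Lemma gadget_alt_path_into (X : {set V}) : X != set0 ->
  (forall v, v \in X -> [/\ v \in P1, v != p & v != r]) ->
  exists a, (a = 1 \/ a = 2) /\
  exists (s t : nat -> V) (Q Q' : nat -> seq V),
    [/\ alt_path_in VG A a b s t Q Q', t a \in X, (s 1 == p) || (s 1 == q),
        #|[set v in alt_walk a Q Q' | (v == p) || (v == q)]| = 1 &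
        #|[set v in alt_walk a Q Q' | v \in X]| = 1].
Proof.
move=> /set0Pn[v0 Xv0] XP1.
have XM v : v \in X -> v \in M.
  by case/XP1; rewrite in_cons mem_rcons in_cons => /or3P[] // /eqP->; rewrite eqxx.
have [x Xx [S cS /alt_path_of_gadget_path[a [a12 [s [t [Q [Q' [R tx s1 pq cardX]]]]]]]]] :
    gadget_path_into (mem X).
  by apply: gadget_path_into_exists; apply/hasP; exists v0; rewrite ?XM.
have pq_notin_X u : (u == p) || (u == q) -> u \notin X.
  by move=> u_pq; apply/negP=> /XM uM; rewrite spine_neq_pq ?mem_cat ?uM ?orbT in u_pq.
have P2_X : count (mem X) P2 = 0.
  rewrite (eq_in_count (a2 := pred0)) ?count_pred0 // => u /P2_notin_M uM.
  by apply/negbTE; apply: contra uM; apply: XM.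
exists a; split=> //; exists s, t, Q, Q'; split=> //; first by rewrite tx.
by rewrite cardX ?count_cat ?P2_X ?cS // pq_notin_X ?eqxx ?orbT.
Qed.

End ExtendedGadget.

Lemma ext_gadget_II_spine (V : finType) b (p q r : V) P1 P2 ex : 1 <= b ->
  ext_gadget_II b p q r P1 P2 ex ->
  exists f P2' M, [/\ P1 = r :: rcons M p, P2 = f :: P2', last f P2' = r,
    uniq [:: q, p & (f :: P2') ++ M] & b <= (size M).+1 /\ b <= size P2'].
Proof.
move=> b_gt0 [[/dpath_ft_cons[s1 -> [last1 uniq1]] long1 qP1]
  [f /dpath_ft_cons[P2' -> [last2 uniq2]] long2] meet qP2 _].
have b_le : b <= 2 * b ^ 2 + b - 2 by nia.
case/lastP: s1 last1 long1 uniq1 qP1 meet => [_ | M y]; first by rewrite /dlength /=; lia.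
rewrite last_rcons => -> long1 uniq1 qP1 meet.
exists f, P2', M; split=> //; last first.
  by move: long1 long2; rewrite /dlength /= size_rcons; lia.
have uniq_P2P1 : uniq (q :: (f :: P2') ++ rcons M p).
  have qM : q \notin rcons M p by move: qP1; rewrite in_cons negb_or => /andP[].
  rewrite cons_uniq mem_cat negb_or qP2 qM.
  apply: uniq_cat_meet uniq2 uniq1 _ => v vP2 vP1.
  by apply/eqP; rewrite -[v == r]/(v \in pred1 r) -meet inE /= vP1 vP2.
rewrite -(perm_uniq (_ : perm_eq (q :: (f :: P2') ++ rcons M p) _)) //.
by rewrite perm_cons -rcons_cat perm_rcons.
Qed.

Theorem lemma2p5 (V : finType) (b : nat) (p q r : V) (P1 P2 : seq V)
  (ex : rel V) :
  1 <= b ->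
  ext_gadget_II b p q r P1 P2 ex ->
  (forall x, gadgetV q P1 P2 x -> x != p -> x != q ->
     exists a, (a = 1 \/ a = 2) /\
     exists (s t : nat -> V) (Q Q' : nat -> seq V),
       [/\ alt_path_in (gadgetV q P1 P2) (gadgetA q P1 P2 ex) a b s t Q Q',
           t a = x,
           (s 1 == p) || (s 1 == q) &
           #|[set v in alt_walk a Q Q' | (v == p) || (v == q)]| = 1])
  /\
  (forall X : {set V}, X != set0 ->
     (forall v, v \in X -> [/\ v \in P1, v != p & v != r]) ->
     exists a, (a = 1 \/ a = 2) /\
     exists (s t : nat -> V) (Q Q' : nat -> seq V),
       [/\ alt_path_in (gadgetV q P1 P2) (gadgetA q P1 P2 ex) a b s t Q Q',
           t a \in X,
           (s 1 == p) || (s 1 == q),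
           #|[set v in alt_walk a Q Q' | (v == p) || (v == q)]| = 1 &
           #|[set v in alt_walk a Q Q' | v \in X]| = 1]).
Proof.
move=> b_gt0 gadget; have [_ _ _ _ [ex_nonempty ex_arcs]] := gadget.
have [f [P2' [M [eP1 eP2 P2_last spine_uniq [P1_long P2_long]]]]] :=
  ext_gadget_II_spine b_gt0 gadget.
subst P1 P2; split.
- exact: gadget_alt_path_to.
- exact: gadget_alt_path_into.
Qed.
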